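(* Consider the perturbed system $\dot x = f(x)+\psi(x)$, where $f,\psi:\mathbb R^n\to\mathbb R^n$ are continuous, $f(0)=0$, solutions exist and are unique, and there exists $L>0$ such that $\|\psi(x)\|\leq L\|x\|$ for all $x\in\mathbb R^n$. Suppose the origin of the nominal system $\dot x = f(x)$ is fixed-time stable, and that there exists a continuously differentiable, positive definite, radially unbounded function $V:\mathbb R^n\to\mathbb R$ such that, along trajectories of the nominal system, $\dot V(x)\leq -aV(x)^p - bV(x)^q$ for all $x\neq 0$, with $a,b>0$, $0<p<1$, $q>1$. Assume further that there exist $k_1,k_2>0$ such that $V(x)\geq k_1\|x\|^2$ and $\left\|\frac{\partial V}{\partial x}(x)\right\|\leq k_2\|x\|$ for all $x\in\mathbb R^n$. Then the origin of the perturbed system $\dot x = f(x)+\psi(x)$ is fixed-time stable.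
   Context: $\|\cdot\|$ is the Euclidean norm. Fixed-time stability (FxTS) of the origin is understood as: there is a neighborhood $D$ of the origin (possibly all of $\mathbb R^n$) such that every trajectory starting in $D$ reaches the origin (and stays there) within a time $T$ bounded by a constant independent of the initial condition in $D$. *)

From mathcomp Require Import all_boot all_order all_algebra.
From mathcomp Require Import all_classical all_reals all_analysis.
Import Order.TTheory GRing.Theory Num.Theory numFieldNormedType.Exports.
Set Implicit Arguments. Unset Strict Implicit. Unset Printing Implicit Defensive.
Local Open Scope ring_scope.
Local Open Scope classical_set_scope.

Section Defs.
Context {R : realType} {n : nat}.

(* Euclidean norm on R^n (the library norm on matrices is the max norm). *)
Definition enorm (x : 'rV[R]_n) : R := Num.sqrt (\sum_(i < n) x ord0 i ^+ 2).

Definition grad (V : 'rV[R]_n -> R) (x : 'rV[R]_n) : 'rV[R]_n :=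
  \row_(i < n) derive V x (delta_mx ord0 i).

Definition C1 (V : 'rV[R]_n -> R) : Prop :=
  (forall x, differentiable V x) /\ continuous (grad V).

Definition pos_def (V : 'rV[R]_n -> R) : Prop :=
  V 0 = 0 /\ forall x, x != 0 -> 0 < V x.

Definition radially_unbounded (V : 'rV[R]_n -> R) : Prop :=
  forall M : R, exists r : R, forall x, r < enorm x -> M < V x.

Definition is_solution (F : 'rV[R]_n -> 'rV[R]_n) (x0 : 'rV[R]_n)
    (x : R -> 'rV[R]_n) : Prop :=
  x 0 = x0 /\ (x t @[t --> (0 : R)^'+] --> x0) /\
  forall t : R, 0 < t -> is_derive t (1 : R) x (F (x t)).

Definition well_posed (F : 'rV[R]_n -> 'rV[R]_n) : Prop :=
  forall x0, (exists x, is_solution F x0 x) /\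
    (forall x y, is_solution F x0 x -> is_solution F x0 y ->
       forall t, 0 <= t -> x t = y t).

Definition FxTS (F : 'rV[R]_n -> 'rV[R]_n) : Prop :=
  exists D : set 'rV[R]_n, nbhs (0 : 'rV[R]_n) D /\
  exists T : R, forall x0, D x0 -> forall x, is_solution F x0 x ->
    exists t, 0 <= t <= T /\ forall s, t <= s -> x s = 0.

End Defs.

From mathcomp Require Import all_boot all_order all_algebra.
From mathcomp Require Import all_classical all_reals all_analysis.
From mathcomp Require Import ring lra.
Import Order.TTheory GRing.Theory Num.Theory numFieldNormedType.Exports.
Local Open Scope ring_scope.
Local Open Scope classical_set_scope.

(* Near the origin the perturbation is dominated by the nominal decay.  Since
   |dV/dx| <= k2 |x|, |psi x| <= L |x| and V >= k1 |x|^2, Young's inequality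
   bounds the contribution of psi to dV/dt by c V with c = (k2^2 + L^2)/(2 k1),
   and c V <= (a/2) V^p as long as V <= r = (a/(2c))^(1/(1-p)).  On the
   sublevel set {V < r}, a neighbourhood of 0, this gives dV/dt <= -(a/2) V^p,
   so the set is forward invariant and V^(1-p) decreases at rate at least
   (1-p) a/2: every trajectory starting there reaches 0 before the uniform time
   r^(1-p) / ((1-p) a/2). *)

Section real_analysis.
Context {R : realType}.

Lemma is_derive_continuous {U : normedModType R} {f : R -> U} {t : R} {df : U} :
  is_derive t 1 f df -> {for t, continuous f}.
Proof. by case=> /derivable1_diffP /differentiable_continuous. Qed.

Lemma is_derive_diff_comp {U : normedModType R} {f : R -> U} {g : U -> R}
    {t : R} {df : U} :
  is_derive t 1 f df -> differentiable g (f t) ->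
  is_derive t 1 (g \o f) ('d g (f t) df).
Proof.
move=> [f_der <-] g_diff.
have f_diff : differentiable f t by apply/derivable1_diffP.
have gf_diff : differentiable (g \o f) t by exact: differentiable_comp.
apply: DeriveDef; first exact/derivable1_diffP.
by rewrite deriveE // diff_comp //= deriveE.
Qed.

Lemma MVT_oc (f df : R -> R) (a b : R) : a < b ->
  (forall t, a < t <= b -> is_derive t 1 f (df t)) -> f @ a^'+ --> f a ->
  exists2 c, c \in `]a, b[%R & f b - f a = df c * (b - a).
Proof.
move=> ab f_der f_rcont.
have f_der_oo t : t \in `]a, b[%R -> is_derive t 1 f (df t).
  by rewrite in_itv /= => /andP[a_lt t_lt]; apply: f_der; rewrite a_lt ltW.
apply: MVT => //; apply: derivable_oo_LRcontinuous_within; split => //.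
- by move=> t /f_der_oo [].
- apply: cvg_at_left_filter; apply: is_derive_continuous (f_der b _).
  by rewrite ab lexx.
Qed.

Lemma first_exit (W : R -> R) (a s l : R) : a <= s -> W a < l <= W s ->
  (forall t, a <= t -> W @ t^'+ --> W t) ->
  exists v, [/\ a < v <= s, l <= W v & forall t, a <= t < v -> W t < l].
Proof.
move=> a_le_s /andP[Wa_lt lWs] W_rcont.
pose S := [set t | a <= t <= s /\ l <= W t].
have Ss : S s by split; rewrite ?a_le_s ?lexx.
have lbS : lbound S a by move=> t [/andP[]].
have hS : has_inf S by split; [exists s | exists a].
pose v := inf S.
have v_le t : S t -> v <= t := ge_inf (proj2 hS) (x := t).
have a_le_v : a <= v := lb_le_inf (ex_intro _ s Ss) lbS.
have lWv : l <= W v.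
  rewrite leNgt; apply/negP => Wv_lt.
  have near_v : \forall t \near v^'+, W t < l.
    exact: (cvgr_lt (W v) (W_rcont v a_le_v) l Wv_lt).
  have [δ /= δ0 Wδ] := (nbhs_ballP v _).1 near_v.
  have [e Se ev] := inf_adherent δ0 hS.
  have [ve|ve] := eqVneq v e; first by move: Wv_lt; rewrite ve ltNge; case: Se => _ ->.
  have : W e < l.
    apply: Wδ; last by rewrite lt_neqAle ve v_le.
    by rewrite /ball /= distrC ger0_norm ?subr_ge0 ?v_le //; rewrite -/v in ev; lra.
  by rewrite ltNge; case: Se => _ ->.
exists v; split => //.
- rewrite (v_le s Ss) andbT lt_neqAle a_le_v andbT.
  by apply/eqP => av; move: lWv; rewrite -av leNgt Wa_lt.
- move=> t /andP[a_le_t tv]; rewrite ltNge; apply/negP => lWt.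
  have St : S t by split; rewrite // a_le_t (le_trans (ltW tv) (v_le s Ss)).
  by move: tv; rewrite ltNge v_le.
Qed.

Section decreasing_below_level.
Context {W d : R -> R} {t0 : R}.
Hypothesis W_der : forall t, t0 < t -> is_derive t 1 W (d t).
Hypothesis W_rcont : W @ t0^'+ --> W t0.

Let W_derivable_oy : derivable_oy_Rcontinuous W t0.
Proof. by split => // t; rewrite in_itv /= andbT => /W_der []. Qed.

Let W_rcont_ge t : t0 <= t -> W @ t^'+ --> W t.
Proof. by move=> t0t; case: (derivable_oy_continuousW t0t W_derivable_oy). Qed.

Let W_MVT {c e} : t0 <= c -> c < e ->
  exists2 x, x \in `]c, e[%R & W e - W c = d x * (e - c).
Proof.
move=> t0c ce; apply: MVT_oc => //; last exact: W_rcont_ge.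
by move=> t /andP[ct _]; apply: W_der; exact: le_lt_trans ct.
Qed.

Lemma sublevel_nonincreasing (r : R) :
  (forall t, t0 < t -> W t < r -> d t <= 0) ->
  forall t1 s, t0 <= t1 -> t1 <= s -> W t1 < r -> W s <= W t1.
Proof.
move=> d_le0 t1 s t01 t1s W1r; rewrite leNgt; apply/negP => W1s.
pose l := Num.min (W s) ((W t1 + r) / 2).
have l_gt : W t1 < l by rewrite lt_min W1s /=; lra.
have l_lt : l < r by rewrite gt_min orbC; apply/orP; left; lra.
have [v [/andP[t1v vs] lWv W_lt]] : exists v, [/\ t1 < v <= s, l <= W v
    & forall t, t1 <= t < v -> W t < l].
  apply: first_exit => //; first by rewrite l_gt ge_min lexx.
  by move=> t t1t; apply: W_rcont_ge; exact: le_trans t1t.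
have [c /[!in_itv]/= /andP[t1c cv] Wv_eq] := W_MVT t01 t1v.
have dc : d c <= 0.
  apply: d_le0; first exact: le_lt_trans t1c.
  by apply: lt_trans l_lt; apply: W_lt; rewrite cv ltW.
have : d c * (v - t1) <= 0 by apply: mulr_le0_ge0 => //; rewrite subr_ge0 ltW.
lra.
Qed.

Lemma finite_time_zero (a p : R) : 0 < a -> p < 1 ->
  (forall t, t0 < t -> 0 < W t -> d t <= - a * W t `^ p) ->
  exists t, t0 <= t <= t0 + W t0 `^ (1 - p) / (a * (1 - p)) /\ W t <= 0.
Proof.
move=> a_gt0 p_lt1 decay.
pose e := 1 - p; pose k := a * e; pose T := W t0 `^ e / k.
have e_gt0 : 0 < e by rewrite subr_gt0.
have k_gt0 : 0 < k by rewrite mulr_gt0.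
have [W0_le0|W0_gt0] := leP (W t0) 0.
  by exists t0; rewrite lexx lerDl divr_ge0 ?powR_ge0 // ltW.
have T_gt0 : 0 < T by rewrite divr_gt0 ?powR_gt0.
apply: contrapT => no_zero.
have W_gt0 t : t0 <= t <= t0 + T -> 0 < W t.
  by move=> tT; rewrite ltNge; apply/negP => Wt; apply: no_zero; exists t.
(* G would be nonincreasing on [t0, t0 + T], yet G (t0 + T) > G t0. *)
pose G := (@powR R ^~ e \o W) + k \*: id.
have G_der t : t0 < t <= t0 + T -> is_derive t 1 G (e * W t `^ (e - 1) * d t + k).
  move=> /andP[t0t tT]; apply: is_deriveD.
    apply: is_derive1_comp; last exact: W_der.
    by apply: is_derive1_powR; apply: W_gt0; rewrite ltW.
  by rewrite -[X in is_derive _ _ _ X]mulr1; exact: is_deriveZ.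
have G_rcont : G @ t0^'+ --> G t0.
  apply: cvgD; first apply: (cvg_comp _ _ W_rcont).
    exact: is_derive_continuous (is_derive1_powR e W0_gt0).
  by apply: cvg_at_right_filter; apply: is_derive_continuous; apply: is_deriveZ.
have G_der_le0 t : t0 < t <= t0 + T -> e * W t `^ (e - 1) * d t + k <= 0.
  move=> /andP[t0t tT]; have Wt_gt0 : 0 < W t by rewrite W_gt0 // (ltW t0t).
  have pow_cancel : W t `^ (e - 1) * W t `^ p = 1.
    have exp0 : e - 1 + p = 0 by rewrite /e; ring.
    by rewrite -powRD ?exp0 ?powRr0 // eqxx gt_eqF.
  have eX_ge0 : 0 <= e * W t `^ (e - 1) by rewrite mulr_ge0 ?powR_ge0 ?ltW.
  have := ler_wpM2l eX_ge0 (decay t t0t Wt_gt0).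
  rewrite (_ : _ * (- a * _) = - k * (W t `^ (e - 1) * W t `^ p)); last first.
    by rewrite /k; ring.
  rewrite pow_cancel; lra.
have [c /[!in_itv]/= /andP[t0c cT] G_eq] : exists2 c, c \in `]t0, t0 + T[%R &
    W (t0 + T) `^ e + k * (t0 + T) - (W t0 `^ e + k * t0)
      = (e * W c `^ (e - 1) * d c + k) * (t0 + T - t0).
  by apply: (@MVT_oc G) => //; rewrite ltrDl.
have : (e * W c `^ (e - 1) * d c + k) * (t0 + T - t0) <= 0.
  by rewrite mulr_le0_ge0 ?G_der_le0 ?t0c ?(ltW cT) // addrC addKr ltW.
have kT : k * T = W t0 `^ e by rewrite /T mulrC divfK ?gt_eqF.
have WT_gt0 : 0 < W (t0 + T) `^ e.
  by rewrite powR_gt0 // W_gt0 // lexx andbT lerDl ltW.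
lra.
Qed.

End decreasing_below_level.

Lemma mulr_le_powR (c m p w : R) : 0 < c -> 0 < m -> p < 1 -> 0 < w ->
  w <= (m / c) `^ (1 - p)^-1 -> c * w <= m * w `^ p.
Proof.
move=> c_gt0 m_gt0 p_lt1 w_gt0 w_le.
have e_gt0 : 0 < 1 - p by rewrite subr_gt0.
have mc_gt0 : 0 < m / c by rewrite divr_gt0.
have w_split : w = w `^ (1 - p) * w `^ p.
  rewrite -powRD ?subrK ?powRr1 ?ltW //.
  by apply/implyP => _; rewrite gt_eqF.
have w_small : w `^ (1 - p) <= m / c.
  rewrite -[leRHS](powRr1 (ltW mc_gt0)) -[X in _ <= _ `^ X](mulVf (lt0r_neq0 e_gt0)).
  by rewrite powRrM; apply: ge0_ler_powR; rewrite ?nnegrE ?powR_ge0 // ltW.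
rewrite {1}w_split mulrA ler_wpM2r ?powR_ge0 //.
apply: le_trans (ler_wpM2l (ltW c_gt0) w_small) _.
by rewrite mulrCA mulfV ?gt_eqF ?mulr1.
Qed.
End real_analysis.

Section euclidean.
Context {R : realType} {n : nat}.
Implicit Types (u x v : 'rV[R]_n) (V : 'rV[R]_n -> R).

Lemma enorm_ge0 u : 0 <= enorm u.
Proof. exact: sqrtr_ge0. Qed.

Lemma sqr_enorm u : enorm u ^+ 2 = \sum_(i < n) u ord0 i ^+ 2.
Proof. by rewrite sqr_sqrtr // sumr_ge0 // => i _; rewrite sqr_ge0. Qed.

Lemma diff_gradE V x v : differentiable V x ->
  'd V x v = \sum_(i < n) v ord0 i * grad V x ord0 i.
Proof.
move=> V_diff; rewrite {1}(row_sum_delta v) linear_sum; apply: eq_bigr => i _.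
by rewrite linearZ /= mxE deriveE.
Qed.

Lemma diff_le_sqr_enorm V x v : differentiable V x ->
  'd V x v <= (enorm (grad V x) ^+ 2 + enorm v ^+ 2) / 2.
Proof.
move=> V_diff; rewrite diff_gradE // !sqr_enorm -big_split /= mulr_suml.
by apply: ler_sum => i _; have := sqr_ge0 (grad V x ord0 i - v ord0 i); lra.
Qed.
End euclidean.

Section perturbed_lyapunov.
Context {R : realType} {n : nat}.
Context {f psi : 'rV[R]_n -> 'rV[R]_n} {V : 'rV[R]_n -> R} {L a b p q k1 k2 : R}.
Hypotheses (V_diff : forall x, differentiable V x) (V_pos_def : pos_def V).
Hypotheses (f0 : f 0 = 0) (psi_le : forall x, enorm (psi x) <= L * enorm x).
Hypotheses (L_gt0 : 0 < L) (a_gt0 : 0 < a) (b_ge0 : 0 <= b) (p_lt1 : p < 1).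
Hypothesis nominal_decay :
  forall x, x != 0 -> 'd V x (f x) <= - a * V x `^ p - b * V x `^ q.
Hypotheses (k1_gt0 : 0 < k1) (V_ge : forall x, k1 * enorm x ^+ 2 <= V x).
Hypothesis grad_le : forall x, enorm (grad V x) <= k2 * enorm x.

Let c := (k2 ^+ 2 + L ^+ 2) / (2 * k1).
Let r := (a / 2 / c) `^ (1 - p)^-1.

Let c_gt0 : 0 < c.
Proof. by rewrite divr_gt0 ?mulr_gt0 // ltr_wpDl ?sqr_ge0 ?exprn_gt0. Qed.

Let half_a_gt0 : 0 < a / 2.
Proof. by rewrite divr_gt0. Qed.

Let V_ge0 x : 0 <= V x.
Proof. by apply: le_trans (V_ge x); rewrite mulr_ge0 ?sqr_ge0 ?ltW. Qed.

Lemma diff_psi_le x : 'd V x (psi x) <= c * V x.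
Proof.
apply: le_trans (diff_le_sqr_enorm _ _ (psi x) (V_diff x)) _.
have sqr_le (u w : R) : 0 <= u -> u <= w -> u ^+ 2 <= w ^+ 2.
  by move=> u0 uw; rewrite !expr2 ler_pM.
have g2 := sqr_le _ _ (enorm_ge0 (grad V x)) (grad_le x).
have psi2 := sqr_le _ _ (enorm_ge0 (psi x)) (psi_le x).
have ck1 : c * k1 = (k2 ^+ 2 + L ^+ 2) / 2 by rewrite /c; field; rewrite gt_eqF.
have := ler_wpM2l (ltW c_gt0) (V_ge x); rewrite mulrA ck1 !exprMn in g2 psi2 *.
lra.
Qed.

Lemma diff_perturbed_le_powR x : 0 < V x -> V x <= r ->
  'd V x (f x + psi x) <= - (a / 2) * V x `^ p.
Proof.
move=> Vx_gt0 Vx_le; rewrite linearD /=.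
have x_neq0 : x != 0 by apply: contraTneq Vx_gt0 => ->; rewrite V_pos_def.1 ltxx.
have := nominal_decay x x_neq0; have := diff_psi_le x.
have := mulr_le_powR _ _ _ _ c_gt0 half_a_gt0 p_lt1 Vx_gt0 Vx_le.
have : 0 <= b * V x `^ q by rewrite mulr_ge0 ?powR_ge0.
lra.
Qed.

Lemma diff_perturbed_le0 x : V x <= r -> 'd V x (f x + psi x) <= 0.
Proof.
move=> Vx_le; have [Vx_gt0|Vx_le0] := ltP 0 (V x).
  apply: le_trans (diff_perturbed_le_powR _ Vx_gt0 Vx_le) _.
  by rewrite mulNr oppr_le0 mulr_ge0 ?powR_ge0 // divr_ge0 // ltW.
have -> : x = 0 by apply: contraTeq Vx_le0; rewrite -ltNge; exact: V_pos_def.2.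
by rewrite f0 add0r; apply: le_trans (diff_psi_le 0) _; rewrite V_pos_def.1 mulr0.
Qed.

Lemma sublevel_settles : exists r0 T : R, 0 < r0 /\
  forall x0 xs, V x0 < r0 -> is_solution (fun x => f x + psi x) x0 xs ->
  exists t, 0 <= t <= T /\ forall s, t <= s -> xs s = 0.
Proof.
have r_gt0 : 0 < r by rewrite powR_gt0 // divr_gt0.
exists r, (r `^ (1 - p) / (a / 2 * (1 - p))); split => // x0 xs Vx0_lt.
case=> xs0 [xs_rcont xs_der].
pose W t := V (xs t).
pose d t := 'd V (xs t) (f (xs t) + psi (xs t)).
have W_der (t : R) : 0 < t -> is_derive t 1 W (d t).
  by move=> t_gt0; exact: is_derive_diff_comp (xs_der t t_gt0) (V_diff _).
have W_rcont : W @ 0^'+ --> W 0.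
  rewrite /W xs0; apply: (cvg_comp _ _ xs_rcont).
  exact: (differentiable_continuous (V_diff x0)).
have d_le0 (t : R) : 0 < t -> W t < r -> d t <= 0.
  by move=> _ /ltW; exact: diff_perturbed_le0.
have W_le (t1 s : R) : 0 <= t1 -> t1 <= s -> W t1 < r -> W s <= W t1.
  exact: sublevel_nonincreasing W_der W_rcont _ d_le0 t1 s.
have W0_lt : W 0 < r by rewrite /W xs0.
have decay (t : R) : 0 < t -> 0 < W t -> d t <= - (a / 2) * W t `^ p.
  move=> t_gt0 Wt_gt0; apply: diff_perturbed_le_powR => //; apply: ltW.
  exact: le_lt_trans (W_le 0 t (lexx 0) (ltW t_gt0) W0_lt) W0_lt.
have [t [/andP[t_ge0 t_le] Wt_le0]] :=
  finite_time_zero W_der W_rcont _ _ half_a_gt0 p_lt1 decay.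
have pow_le : W 0 `^ (1 - p) <= r `^ (1 - p).
  by apply: ge0_ler_powR; rewrite ?nnegrE ?subr_ge0 ?V_ge0 ?ltW.
exists t; split.
  by rewrite t_ge0 (le_trans t_le) // add0r ler_pM2r // invr_gt0 mulr_gt0 // subr_gt0.
move=> s ts.
have Ws_le0 : W s <= 0.
  have Wt_lt : W t < r := le_lt_trans Wt_le0 r_gt0.
  exact: le_trans (W_le t s t_ge0 ts Wt_lt) Wt_le0.
by apply/eqP; apply: contraTT Ws_le0 => /(proj2 V_pos_def) Ws_gt0; rewrite -ltNge.
Qed.

End perturbed_lyapunov.

Theorem corollary1 (R : realType) (n : nat)
  (f psi : 'rV[R]_n -> 'rV[R]_n) (V : 'rV[R]_n -> R)
  (L a b p q k1 k2 : R) :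
  continuous f -> continuous psi -> f 0 = 0 ->
  well_posed (fun x => f x + psi x) ->
  0 < L -> (forall x, enorm (psi x) <= L * enorm x) ->
  FxTS f ->
  C1 V -> pos_def V -> radially_unbounded V ->
  0 < a -> 0 < b -> 0 < p -> p < 1 -> 1 < q ->
  (forall x, x != 0 -> 'd V x (f x) <= - a * V x `^ p - b * V x `^ q) ->
  0 < k1 -> 0 < k2 ->
  (forall x, k1 * enorm x ^+ 2 <= V x) ->
  (forall x, enorm (grad V x) <= k2 * enorm x) ->
  FxTS (fun x => f x + psi x).
Proof.
move=> _ _ f0 _ L_gt0 psi_le _ [V_diff _] V_pos_def _ a_gt0 b_gt0 _ p_lt1 _
  nominal_decay k1_gt0 _ V_ge grad_le.
have [r [T [r_gt0 settles]]] := sublevel_settles V_diff V_pos_def f0 psi_le L_gt0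
  a_gt0 (ltW b_gt0) p_lt1 nominal_decay k1_gt0 V_ge grad_le.
exists [set x | V x < r]; split; last by exists T => x0 Vx0 xs; exact: settles.
have V_cont0 : {for 0, continuous V} := differentiable_continuous (V_diff 0).
by apply: (cvgr_lt (V 0) V_cont0); rewrite V_pos_def.1.
Qed.
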